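(* Let $M$ be an $n$-quasi-paving matroid of rank $n$. Then $M$ arises from a tame paving matroid by successive principal extensions along flats of rank $n-2$; that is, there exist a tame paving matroid $M_0$ and matroids $M_1,\ldots,M_r=M$ ($r\ge 0$) such that for each $i\in[r]$, $M_i=M_{i-1}+_{F_i}a_i$ for some flat $F_i$ of $M_{i-1}$ of rank $n-2$ and some new element $a_i$.
   Context: Quasi-paving construction: given a positive integer $n\le d$ and a collection $\mathcal{H}=\{H_1,\ldots,H_k\}$ of subsets of $[d]$ any three of which have empty intersection, the $n$-quasi-paving matroid with representation $\mathcal{H}$ is the matroid on $[d]$ whose circuits are: (Type 1) the $(n-1)$-element subsets contained in the intersection of two distinct members of $\mathcal{H}$; (Type 2) the $n$-element subsets of some $H_i$ containing no Type 1 set; (Type 3) the $(n+1)$-element subsets containing no Type 1 or Type 2 set. An $n$-quasi-paving matroid is one arising in this way (its rank need not be $n$). A paving matroid of rank $n$ is one all of whose circuits have size $n$ or $n+1$; a dependent hyperplane is a maximal set of size at least $n$ all of whose $n$-subsets are circuits; a paving matroid is tame if any three distinct dependent hyperplanes have empty intersection. Principal extension: if $M'$ is a matroid on $E'$, $F$ a flat of $M'$ and $a\notin E'$, then $M'+_F a$ is the matroid on $E'\cup\{a\}$ with bases $\mathcal{B}(M')\cup\{(\lambda\setminus\{b\})\cup\{a\}:\lambda\in\mathcal{B}(M'),\ b\in\lambda\cap F\}$. *)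

From mathcomp Require Import all_boot.
Set Implicit Arguments. Unset Strict Implicit. Unset Printing Implicit Defensive.

Section Matroids.
Variable T : finType.

Definition is_matroid (E : {set T}) (B : {set {set T}}) : Prop :=
  [/\ B != set0,
      forall b, b \in B -> b \subset E &
      forall b1 b2, b1 \in B -> b2 \in B -> forall x, x \in b1 :\: b2 ->
        exists2 y, y \in b2 :\: b1 & (y |: (b1 :\ x)) \in B].

Definition indep (B : {set {set T}}) (X : {set T}) : bool :=
  [exists b in B, X \subset b].

Definition rank (B : {set {set T}}) (X : {set T}) : nat :=
  \max_(Y in powerset X | indep B Y) #|Y|.

Definition mrank (E : {set T}) (B : {set {set T}}) : nat := rank B E.

Definition circuit (E : {set T}) (B : {set {set T}}) (C : {set T}) : bool :=
  [&& C \subset E, ~~ indep B C & [forall x in C, indep B (C :\ x)]].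

Definition flat (E : {set T}) (B : {set {set T}}) (F : {set T}) : bool :=
  (F \subset E) && [forall x in E :\: F, rank B F < rank B (x |: F)].

Definition paving_of_rank (n : nat) (E : {set T}) (B : {set {set T}}) : Prop :=
  mrank E B = n /\
  forall C, circuit E B C -> #|C| = n \/ #|C| = n.+1.

Definition dh_candidate (n : nat) (E : {set T}) (B : {set {set T}}) (H : {set T}) : bool :=
  [&& H \subset E, n <= #|H| &
      [forall C in powerset H, (#|C| == n) ==> circuit E B C]].

Definition dep_hyperplane (n : nat) (E : {set T}) (B : {set {set T}}) (H : {set T}) : bool :=
  dh_candidate n E B H &&
  [forall H' : {set T}, (H \proper H') ==> ~~ dh_candidate n E B H'].

Definition tame_paving (E : {set T}) (B : {set {set T}}) : Prop :=
  let n := mrank E B in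
  paving_of_rank n E B /\
  forall H1 H2 H3, dep_hyperplane n E B H1 -> dep_hyperplane n E B H2 ->
    dep_hyperplane n E B H3 -> H1 != H2 -> H1 != H3 -> H2 != H3 ->
    H1 :&: H2 :&: H3 = set0.

Definition qp_type1 (n : nat) (Hs : {set {set T}}) (C : {set T}) : bool :=
  (#|C| == n.-1) &&
  [exists H1 in Hs, exists H2 in Hs, (H1 != H2) && (C \subset H1 :&: H2)].

Definition qp_type2 (n : nat) (Hs : {set {set T}}) (C : {set T}) : bool :=
  [&& #|C| == n, [exists H in Hs, C \subset H] &
      ~~ [exists D in powerset C, qp_type1 n Hs D]].

Definition qp_type3 (n : nat) (Hs : {set {set T}}) (C : {set T}) : bool :=
  (#|C| == n.+1) &&
  ~~ [exists D in powerset C, qp_type1 n Hs D || qp_type2 n Hs D].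

Definition quasi_paving (n : nat) (B : {set {set T}}) : Prop :=
  0 < n /\ n <= #|T| /\
  exists Hs : {set {set T}},
    (forall H1 H2 H3, H1 \in Hs -> H2 \in Hs -> H3 \in Hs ->
       H1 != H2 -> H1 != H3 -> H2 != H3 -> H1 :&: H2 :&: H3 = set0) /\
    forall C, circuit [set: T] B C <->
      (qp_type1 n Hs C || qp_type2 n Hs C || qp_type3 n Hs C).

Definition pext_bases (B : {set {set T}}) (F : {set T}) (a : T) : {set {set T}} :=
  B :|: [set a |: (l :\ b) | l in B, b in l :&: F].

End Matroids.

From mathcomp Require Import all_boot zify.
Set Implicit Arguments. Unset Strict Implicit. Unset Printing Implicit Defensive.

(* Three members of the representation Hs never share a point, so a point lies
   in at most one meet H1 :&: H2 of two members, and inside a meet any element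
   of an independent set can be traded for any other element of the meet.
   Delete, as long as possible, one point of a type-1 circuit.  The remaining
   set E0 contains no type-1 circuit, while every deleted point lies in a meet
   that still has n - 2 points in E0; hence E0 spans M, the circuits of M|E0
   have n or n + 1 elements, and its dependent hyperplanes are the traces
   H :&: E0, any three of which are disjoint.  Putting the deleted points back
   one at a time, a basis through the new point a trades it for a point of its
   meet inside E0 and conversely, i.e. a is added freely on the trace of that
   meet, a flat of rank n - 2. *)

Lemma exists_subset_card (T : finType) (A : {set T}) k :
  k <= #|A| -> exists2 S : {set T}, S \subset A & #|S| = k.
Proof.
case/card_geqP => s [s_uniq <- sA]; exists [set x in s].
  by apply/subsetP => x; rewrite inE => /sA.
by rewrite cardsE (card_uniqP s_uniq).
Qed.

Lemma exists_saturating_chain (T : finType) (x0 : T) (E0 : {set T}) :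
  exists (r : nat) (E : nat -> {set T}) (a : nat -> T),
    [/\ E 0 = E0, E r = [set: T] &
        forall i, 0 < i <= r ->
          [/\ E0 \subset E i.-1, a i \notin E i.-1 & E i = a i |: E i.-1]].
Proof.
pose s := enum (~: E0); pose E i := E0 :|: [set x in take i s].
exists (size s), E, (fun i => nth x0 s i.-1); split.
- by apply/setP => x; rewrite !inE take0 orbF.
- by apply/setP => x; rewrite !inE take_size mem_enum inE orbN.
move=> [//|i] /= lt_is; have take_rcons := take_nth x0 lt_is.
split; first exact: subsetUl.
  have := take_uniq i.+1 (enum_uniq (mem (~: E0))).
  rewrite take_rcons rcons_uniq => /andP [notin_take _].
  have : nth x0 s i \in s := mem_nth x0 lt_is.
  by rewrite !inE mem_enum inE negb_or notin_take andbT.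
by apply/setP => x; rewrite !inE take_rcons mem_rcons inE orbCA.
Qed.

Section Bases.
Variables (T : finType) (E : {set T}) (B : {set {set T}}).
Hypothesis matroidB : is_matroid E B.

Lemma indepS (X Y : {set T}) : X \subset Y -> indep B Y -> indep B X.
Proof.
move=> XY /exists_inP [b bB Yb].
by apply/exists_inP; exists b => //; apply: subset_trans Yb.
Qed.

Lemma basis_indep (b : {set T}) : b \in B -> indep B b.
Proof. by move=> bB; apply/exists_inP; exists b. Qed.

Lemma indep0 : indep B set0.
Proof.
by case: matroidB => /set0Pn [b bB] _ _; apply: indepS (sub0set b) (basis_indep bB).
Qed.

Lemma basis_exchange_into (S : {set T}) (P : {set T} -> Prop) (b0 : {set T}) :
  b0 \in B -> P b0 ->
  (forall (b : {set T}) x, b \in B -> P b -> x \in b :\: S ->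
     exists2 y, y \in S & y |: (b :\ x) \in B /\ P (y |: (b :\ x))) ->
  exists2 b, b \in B & P b /\ b \subset S.
Proof.
move=> b0B Pb0 exch; have [k] := ubnP #|b0 :\: S|.
elim: k b0 b0B Pb0 => // k IH b bB Pb lt_bk.
have [bS | /subsetPn [x xb xS]] := boolP (b \subset S); first by exists b.
have xbS : x \in b :\: S by rewrite inE xS.
have [y yS [b'B Pb']] := exch b x bB Pb xbS.
apply: (IH _ b'B Pb'); rewrite -ltnS (leq_trans _ lt_bk) // ltnS.
rewrite (cardsD1 x (b :\: S)) xbS ltnS; apply: subset_leq_card.
apply/subsetP => z; rewrite !inE => /andP [zS /predU1P [zy | /andP [-> ->]]].
  by rewrite zy yS in zS.
by rewrite zS.
Qed.

Lemma card_bases_eq (b1 b2 : {set T}) : b1 \in B -> b2 \in B -> #|b1| = #|b2|.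
Proof.
suff card_le b b' : b \in B -> b' \in B -> #|b| <= #|b'|.
  by move=> b1B b2B; apply/eqP; rewrite eqn_leq !card_le.
move=> bB b'B; have [_ _ exch] := matroidB.
have [c _ [<- cb']] : exists2 c, c \in B & #|c| = #|b| /\ c \subset b'.
  apply: (basis_exchange_into (P := fun c => #|c| = #|b|)) bB erefl _.
  move=> c x cB <- xc; have [y /setDP [yb' yc] c'B] := exch c b' cB b'B x xc.
  exists y => //; split => //.
  by rewrite cardsU1 in_setD1 (negbTE yc) andbF (cardsD1 x c) (setDP xc).1.
exact: subset_leq_card.
Qed.

Lemma indep_card_le (b Y : {set T}) : b \in B -> indep B Y -> #|Y| <= #|b|.
Proof.
move=> bB /exists_inP [b' b'B Yb'].
by rewrite (card_bases_eq bB b'B) subset_leq_card.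
Qed.

Lemma indep_card_basis (b Y : {set T}) : b \in B -> indep B Y -> #|Y| = #|b| -> Y \in B.
Proof.
move=> bB /exists_inP [b' b'B Yb'] cardY.
suff -> : Y = b' by [].
by apply/eqP; rewrite eqEcard Yb' cardY (card_bases_eq bB b'B) leqnn.
Qed.

Lemma leq_card_rank (X Y : {set T}) : Y \subset X -> indep B Y -> #|Y| <= rank B X.
Proof.
move=> YX indY; apply: (leq_bigmax_cond (P := [pred Y | (Y \in powerset X) && indep B Y])).
by rewrite inE powersetE YX.
Qed.

Lemma rank_leq (X : {set T}) k :
  (forall Y : {set T}, Y \subset X -> indep B Y -> #|Y| <= k) -> rank B X <= k.
Proof. by move=> bound; apply/bigmax_leqP => Y /andP [/[!powersetE]]; apply: bound. Qed.

Lemma mrank_basis (b : {set T}) : b \in B -> mrank E B = #|b|.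
Proof.
move=> bB; have [_ BE _] := matroidB; apply/eqP; rewrite eqn_leq.
rewrite leq_card_rank ?BE ?basis_indep // andbT.
by apply: rank_leq => Y _; apply: indep_card_le.
Qed.

Lemma circuit_dep (C Y : {set T}) : circuit E B C -> C \subset Y -> ~~ indep B Y.
Proof.
by case/and3P => _ depC _ CY; apply: contra depC; apply: indepS.
Qed.

Lemma circuit_neq0 (C : {set T}) : circuit E B C -> C != set0.
Proof. by move/circuit_dep/(_ (subxx C)); apply: contraNneq => ->; apply: indep0. Qed.

Lemma circuit_free_indep (Y : {set T}) :
  Y \subset E -> (forall C : {set T}, C \subset Y -> ~~ circuit E B C) -> indep B Y.
Proof.
have [k] := ubnP #|Y|; elim: k Y => // k IH Y ltYk YE free.
have [// | depY] := boolP (indep B Y).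
have [minY | /forall_inPn [x xY depYx]] := boolP [forall x in Y, indep B (Y :\ x)].
  by move: (free Y (subxx Y)); rewrite /circuit YE depY minY.
case/negP: depYx; apply: IH.
- by move: ltYk; rewrite (cardsD1 x Y) xY.
- exact: subset_trans (subsetDl _ _) YE.
- by move=> C CY; apply: free; apply: subset_trans CY (subsetDl _ _).
Qed.

End Bases.

Definition spanning (T : finType) (B : {set {set T}}) (S : {set T}) : bool :=
  [exists b in B, b \subset S].

Definition restrict (T : finType) (B : {set {set T}}) (S : {set T}) : {set {set T}} :=
  [set b in B | b \subset S].

Definition loops (T : finType) (B : {set {set T}}) : {set T} :=
  [set x | ~~ indep B [set x]].

Lemma notin_loops (T : finType) (B : {set {set T}}) (Y : {set T}) x :
  indep B Y -> x \in Y -> x \notin loops B.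
Proof. by move=> indY xY; rewrite inE negbK; apply: indepS indY; rewrite sub1set. Qed.

Lemma spanningS (T : finType) (B : {set {set T}}) (S S' : {set T}) :
  S \subset S' -> spanning B S -> spanning B S'.
Proof.
move=> SS' /exists_inP [b bB bS].
by apply/exists_inP; exists b => //; apply: subset_trans SS'.
Qed.

Section Restriction.
Variables (T : finType) (B : {set {set T}}) (S : {set T}).
Hypothesis matroidB : is_matroid [set: T] B.
Hypothesis spanS : spanning B S.

Lemma indep_extend_in (Y : {set T}) :
  indep B Y -> Y \subset S -> exists2 b, b \in B & Y \subset b /\ b \subset S.
Proof.
case/exists_inP: spanS => b' b'B b'S /exists_inP [b bB Yb] YS.
apply: (basis_exchange_into (P := fun c => Y \subset c)) bB Yb _.
move=> c x cB Yc /setDP [xc xS]; have [_ _ exch] := matroidB.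
have xcb' : x \in c :\: b' by rewrite inE xc (contra (subsetP b'S x) xS).
have [y /setDP [yb' _] c'B] := exch c b' cB b'B x xcb'.
exists y; first exact: subsetP b'S y yb'.
split => //; apply/subsetP => z zY; rewrite !inE (subsetP Yc z zY) andbT.
by apply/orP; right; apply: contraNneq xS => <-; apply: subsetP YS z zY.
Qed.

Lemma indep_restrict (Y : {set T}) : indep (restrict B S) Y = indep B Y && (Y \subset S).
Proof.
apply/idP/andP => [/exists_inP [b /[!inE] /andP [bB bS] Yb] | [indY YS]].
  by split; [apply/exists_inP; exists b | apply: subset_trans bS].
have [b bB [Yb bS]] := indep_extend_in indY YS.
by apply/exists_inP; exists b; rewrite ?inE ?bB.
Qed.

Lemma restrict_matroid : is_matroid S (restrict B S).
Proof.
case/exists_inP: (spanS) => b0 b0B b0S; have [_ _ exch] := matroidB; split.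
- by apply/set0Pn; exists b0; rewrite inE b0B.
- by move=> b /[!inE] /andP [].
move=> b1 b2 /[!inE] /andP [b1B b1S] /andP [b2B b2S] x xb12.
have [y yb21 b'B] := exch b1 b2 b1B b2B x xb12.
exists y => //; rewrite inE b'B subUset sub1set (subsetP b2S) ?(setDP yb21).1 //=.
exact: subset_trans (subsetDl _ _) b1S.
Qed.

Lemma circuit_restrict (C : {set T}) :
  circuit S (restrict B S) C = (C \subset S) && circuit [set: T] B C.
Proof.
rewrite /circuit subsetT indep_restrict; have [CS | //] := boolP (C \subset S).
rewrite /= andbT; congr (_ && _); apply: eq_forallb_in => x _.
by rewrite indep_restrict (subset_trans (subsetDl _ _) CS) andbT.
Qed.

Lemma mrank_restrict : mrank S (restrict B S) = mrank [set: T] B.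
Proof.
case/exists_inP: (spanS) => b bB bS.
have bS' : b \in restrict B S by rewrite inE bB.
by rewrite (mrank_basis restrict_matroid bS') (mrank_basis matroidB bB).
Qed.

End Restriction.

Section QuasiPaving.
Variables (T : finType) (n : nat) (B : {set {set T}}) (Hs : {set {set T}}).
Hypothesis matroidB : is_matroid [set: T] B.
Hypothesis rankB : mrank [set: T] B = n.
Hypothesis n_gt0 : 0 < n.
Hypothesis members3 : forall H1 H2 H3, H1 \in Hs -> H2 \in Hs -> H3 \in Hs ->
  H1 != H2 -> H1 != H3 -> H2 != H3 -> H1 :&: H2 :&: H3 = set0.
Hypothesis circuitP : forall C, circuit [set: T] B C <->
  qp_type1 n Hs C || qp_type2 n Hs C || qp_type3 n Hs C.

Local Notation circuitB := (circuit [set: T] B).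

Lemma circuitE (C : {set T}) :
  circuitB C = qp_type1 n Hs C || qp_type2 n Hs C || qp_type3 n Hs C.
Proof. by apply/idP/idP => /circuitP. Qed.

Lemma basis_card (b : {set T}) : b \in B -> #|b| = n.
Proof. by move=> bB; rewrite -rankB (mrank_basis matroidB bB). Qed.

Lemma indep_card (Y : {set T}) : indep B Y -> #|Y| <= n.
Proof. by case/exists_inP => b bB Yb; rewrite -(basis_card bB) subset_leq_card. Qed.

Lemma indep_basis (Y : {set T}) : indep B Y -> #|Y| = n -> Y \in B.
Proof.
move=> indY cardY; case/exists_inP: (indY) => b bB _.
by rewrite (indep_card_basis matroidB bB indY) // cardY (basis_card bB).
Qed.

Lemma type1_circuit (C : {set T}) : qp_type1 n Hs C -> circuitB C.
Proof. by rewrite circuitE => ->. Qed.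

Lemma meet_type1 (H1 H2 C : {set T}) : H1 \in Hs -> H2 \in Hs -> H1 != H2 ->
  C \subset H1 :&: H2 -> #|C| = n.-1 -> qp_type1 n Hs C.
Proof.
move=> H1s H2s H12 CM cardC; rewrite /qp_type1 cardC eqxx.
by apply/exists_inP; exists H1 => //; apply/exists_inP; exists H2; rewrite ?H12.
Qed.

Lemma small_circuit_type1 (C : {set T}) :
  circuitB C -> #|C| <= n.-1 -> qp_type1 n Hs C.
Proof.
rewrite circuitE /qp_type2 /qp_type3.
by case/orP => [/orP [// | /and3P [/eqP -> _ _]] | /andP [/eqP -> _]]; lia.
Qed.

Lemma small_indep (Y : {set T}) : #|Y| < n.-1 -> indep B Y.
Proof.
move=> small; apply: (circuit_free_indep (subsetT Y)) => C CY; apply/negP => circC.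
have leCY := subset_leq_card CY.
have /andP [/eqP cardC _] := small_circuit_type1 circC (ltnW (leq_ltn_trans leCY small)).
lia.
Qed.

Lemma member_dep (H Y : {set T}) : H \in Hs -> Y \subset H -> #|Y| = n -> ~~ indep B Y.
Proof.
move=> HsH YH cardY.
have [/exists_inP [D /[!powersetE] DY typeD] | no_type1] :=
  boolP [exists D in powerset Y, qp_type1 n Hs D].
  exact: circuit_dep (type1_circuit typeD) DY.
apply: (circuit_dep (E := [set: T])) (subxx Y).
rewrite circuitE /qp_type2 cardY eqxx no_type1 andbT.
suff -> : [exists H0 in Hs, Y \subset H0] by rewrite orbT.
by apply/exists_inP; exists H.
Qed.

Lemma meet_gt1 (H1 H2 : {set T}) : H1 \in Hs -> H2 \in Hs -> H1 != H2 -> 1 < n.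
Proof.
move=> H1s H2s H12; rewrite ltnNge; apply/negP => le_n1.
have card0 : #|set0 : {set T}| = n.-1 by rewrite cards0; lia.
have := circuit_neq0 matroidB (type1_circuit (meet_type1 H1s H2s H12 (sub0set _) card0)).
by rewrite eqxx.
Qed.

Lemma meet_sub_member (H1 H2 H : {set T}) x : H1 \in Hs -> H2 \in Hs -> H \in Hs ->
  H1 != H2 -> x \in H1 :&: H2 -> x \in H -> H1 :&: H2 \subset H.
Proof.
move=> H1s H2s HsH H12 xM xH.
have [<- | H1H] := eqVneq H1 H; first exact: subsetIl.
have [<- | H2H] := eqVneq H2 H; first exact: subsetIr.
by have /setP/(_ x) := members3 H1s H2s HsH H12 H1H H2H; rewrite inE xM xH inE.
Qed.

Lemma meet_eq (H1 H2 H3 H4 : {set T}) x :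
  H1 \in Hs -> H2 \in Hs -> H3 \in Hs -> H4 \in Hs -> H1 != H2 -> H3 != H4 ->
  x \in H1 :&: H2 -> x \in H3 :&: H4 -> H1 :&: H2 = H3 :&: H4.
Proof.
move=> H1s H2s H3s H4s H12 H34 xM xM'; move: (xM) (xM') => /setIP [x1 x2] /setIP [x3 x4].
apply/eqP; rewrite eqEsubset !subsetI.
by rewrite !(meet_sub_member H1s H2s _ H12 xM, meet_sub_member H3s H4s _ H34 xM').
Qed.

Lemma card_indep_meet (X H1 H2 : {set T}) : indep B X -> H1 \in Hs -> H2 \in Hs ->
  H1 != H2 -> #|X :&: (H1 :&: H2)| < n.-1.
Proof.
move=> indX H1s H2s H12; rewrite ltnNge; apply/negP.
case/exists_subset_card => C CXM cardC.
have CM : C \subset H1 :&: H2 := subset_trans CXM (subsetIr _ _).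
have circC := type1_circuit (meet_type1 H1s H2s H12 CM cardC).
by have := circuit_dep circC (subset_trans CXM (subsetIl _ _)); rewrite indX.
Qed.

Lemma meet_exchange (X H1 H2 : {set T}) a y : indep B X ->
  H1 \in Hs -> H2 \in Hs -> H1 != H2 -> a \in X -> a \in H1 :&: H2 ->
  y \in H1 :&: H2 -> y \notin X -> indep B (y |: (X :\ a)).
Proof.
move=> indX H1s H2s H12 aX aM yM yX.
apply: (circuit_free_indep (subsetT _)) => C CX'; apply/negP => circC.
have yC : y \in C.
  have [// | yC] := boolP (y \in C).
  suff CX : C \subset X by have := circuit_dep circC CX; rewrite indX.
  apply/subsetP => z zC; move/subsetP/(_ z zC): CX'; rewrite !inE.
  by case/predU1P => [zy | /andP [_ ->]] //; rewrite -zy zC in yC.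
pose D := a |: (C :\ y).
have aC : a \notin C.
  apply/negP => /(subsetP CX'); rewrite !inE eqxx /= orbF => /eqP ay.
  by rewrite -ay aX in yX.
have cardD : #|D| = #|C| by rewrite cardsU1 in_setD1 (negbTE aC) andbF (cardsD1 y C) yC.
have indD : indep B D.
  apply: indepS indX; rewrite subUset sub1set aX; apply/subsetP => z /setD1P [zy zC].
  by move/subsetP/(_ z zC): CX'; rewrite !inE (negbTE zy) => /andP [].
(* The meet or member containing C contains y, hence a; so D, like C, is an
   (n-1)-subset of a meet, an n-subset of a member, or has n + 1 points. *)
move: circC; rewrite circuitE /qp_type1 /qp_type2 /qp_type3.
case/orP => [/orP [/andP [/eqP cardC /exists_inP [H3 H3s /exists_inP [H4 H4s]]] |
                   /and3P [/eqP cardC /exists_inP [H HsH CH] _]] | /andP [/eqP cardC _]].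
- case/andP => H34 CM'; have M34 := meet_eq H1s H2s H3s H4s H12 H34 yM (subsetP CM' y yC).
  rewrite -M34 in CM'.
  have DM : D \subset H1 :&: H2.
    by rewrite subUset sub1set aM (subset_trans (subsetDl _ _) CM').
  have circD := type1_circuit (meet_type1 H1s H2s H12 DM (etrans cardD cardC)).
  by have := circuit_dep circD (subxx D); rewrite indD.
- have MH := meet_sub_member H1s H2s HsH H12 yM (subsetP CH y yC).
  have DH : D \subset H.
    by rewrite subUset sub1set (subsetP MH a aM) (subset_trans (subsetDl _ _) CH).
  by have := member_dep HsH DH (etrans cardD cardC); rewrite indD.
- by have := indep_card indD; rewrite cardD cardC ltnn.
Qed.

Lemma meet_exchange_basis (X H1 H2 : {set T}) a y : X \in B ->
  H1 \in Hs -> H2 \in Hs -> H1 != H2 -> a \in X -> a \in H1 :&: H2 ->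
  y \in H1 :&: H2 -> y \notin X -> y |: (X :\ a) \in B.
Proof.
move=> XB H1s H2s H12 aX aM yM yX.
apply: indep_basis; first exact: meet_exchange (basis_indep XB) H1s H2s H12 aX aM yM yX.
by rewrite cardsU1 in_setD1 (negbTE yX) andbF -(basis_card XB) (cardsD1 a X) aX.
Qed.

Lemma meet_avoid (X H1 H2 S : {set T}) a : indep B X ->
  H1 \in Hs -> H2 \in Hs -> H1 != H2 -> a \in X -> a \in H1 :&: H2 -> a \notin S ->
  n.-2 <= #|H1 :&: H2 :&: S| -> exists2 y, y \in H1 :&: H2 :&: S & y \notin X.
Proof.
move=> indX H1s H2s H12 aX aM aS large.
have [MSX | /subsetPn [y yMS yX]] := boolP (H1 :&: H2 :&: S \subset X); last by exists y.
have aMS : a \notin H1 :&: H2 :&: S by rewrite inE (negbTE aS) andbF.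
have aMS_XM : a |: (H1 :&: H2 :&: S) \subset X :&: (H1 :&: H2).
  by rewrite subUset sub1set inE aX aM subsetI MSX subsetIl.
have := leq_ltn_trans (subset_leq_card aMS_XM) (card_indep_meet indX H1s H2s H12).
by rewrite cardsU1 aMS add1n -ltn_predRL ltnNge large.
Qed.

Definition meet_at (a : T) : {set T} :=
  [set x | [exists H1 in Hs, exists H2 in Hs,
    [&& H1 != H2, a \in H1 :&: H2 & x \in H1 :&: H2]]].

Lemma meet_atE (H1 H2 : {set T}) a : H1 \in Hs -> H2 \in Hs -> H1 != H2 ->
  a \in H1 :&: H2 -> meet_at a = H1 :&: H2.
Proof.
move=> H1s H2s H12 aM; apply/setP => x; rewrite inE; apply/idP/idP.
  case/exists_inP => H3 H3s /exists_inP [H4 H4s /and3P [H34 aM' xM']].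
  by rewrite (meet_eq H1s H2s H3s H4s H12 H34 aM aM').
move=> xM; apply/exists_inP; exists H1 => //.
by apply/exists_inP; exists H2; rewrite ?H12 ?aM.
Qed.

Definition type1_free (E : {set T}) : Prop :=
  forall C : {set T}, C \subset E -> ~~ qp_type1 n Hs C.

Definition meets_spanned (E : {set T}) : Prop :=
  forall a, a \notin E -> exists H1 H2 : {set T},
    [/\ H1 \in Hs, H2 \in Hs, H1 != H2, a \in H1 :&: H2 &
         n.-2 <= #|H1 :&: H2 :&: E|].

Lemma meets_spannedS (E E' : {set T}) :
  E \subset E' -> meets_spanned E -> meets_spanned E'.
Proof.
move=> EE' spanE a aE'.
have [H1 [H2 [H1s H2s H12 aM large]]] := spanE a (contra (subsetP EE' a) aE').
by exists H1, H2; split => //; apply: leq_trans large (subset_leq_card (setIS _ EE')).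
Qed.

Lemma meets_spanned_remove (E C : {set T}) x : meets_spanned E -> C \subset E ->
  qp_type1 n Hs C -> x \in C -> meets_spanned (E :\ x).
Proof.
move=> spanE CE /andP [/eqP cardC /exists_inP [H1 H1s /exists_inP [H2 H2s]]].
move=> /andP [H12 CM] xC.
have xM := subsetP CM x xC.
have large : n.-2 <= #|H1 :&: H2 :&: (E :\ x)|.
  have <- : #|C :\ x| = n.-2 by rewrite -cardC (cardsD1 x C) xC.
  by apply: subset_leq_card; rewrite subsetI (subset_trans (subsetDl _ _) CM) setSD.
move=> a; rewrite in_setD1 negb_and negbK => /orP [/eqP -> | aE]; first by exists H1, H2.
have [H3 [H4 [H3s H4s H34 aM' large']]] := spanE a aE.
exists H3, H4; split => //.
have [xM' | xM'] := boolP (x \in H3 :&: H4).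
  by rewrite -(meet_eq H1s H2s H3s H4s H12 H34 xM xM').
apply: leq_trans large' (subset_leq_card _); apply/subsetP => z.
rewrite !inE => /andP [/andP [z3 z4] zE]; rewrite z3 z4 zE !andbT.
by apply: contraNneq xM' => <-; rewrite inE z3 z4.
Qed.

Lemma exists_core : exists E0, type1_free E0 /\ meets_spanned E0.
Proof.
have [k] := ubnP #|[set: T]|; have : meets_spanned [set: T] by move=> a; rewrite inE.
elim: k [set: T] => // k IH E spanE ltEk.
have [C /andP [CE typeC] | free] :=
  pickP [pred C : {set T} | (C \subset E) && qp_type1 n Hs C].
  have /set0Pn [x xC] := circuit_neq0 matroidB (type1_circuit typeC).
  apply: IH (meets_spanned_remove spanE CE typeC xC) _.
  by move: ltEk; rewrite (cardsD1 x E) (subsetP CE x xC).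
by exists E; split => // C CE; move: (free C); rewrite /= CE /= => ->.
Qed.

Lemma meets_spanned_spanning (E : {set T}) : meets_spanned E -> spanning B E.
Proof.
move=> spanE; case: matroidB => /set0Pn [b0 b0B] _ _.
have [b bB [_ bE]] : exists2 b, b \in B & True /\ b \subset E.
  apply: (basis_exchange_into (P := fun _ => True)) b0B I _ => b x bB _ /setDP [xb xE].
  have [H1 [H2 [H1s H2s H12 xM large]]] := spanE x xE.
  have [y /setIP [yM yE] yb] := meet_avoid (basis_indep bB) H1s H2s H12 xb xM xE large.
  by exists y => //; split => //; apply: meet_exchange_basis bB H1s H2s H12 xb xM yM yb.
by apply/exists_inP; exists b.
Qed.

Section Core.
Variable E0 : {set T}.
Hypotheses (free0 : type1_free E0) (spanned0 : meets_spanned E0).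

Let span0 : spanning B E0 := meets_spanned_spanning spanned0.

Lemma core_circuitE (C : {set T}) : circuit E0 (restrict B E0) C =
  (C \subset E0) && (qp_type2 n Hs C || qp_type3 n Hs C).
Proof.
rewrite (circuit_restrict matroidB span0) circuitE.
by have [/free0/negbTE -> | //] := boolP (C \subset E0).
Qed.

Lemma core_circuit_member (C : {set T}) :
  circuit E0 (restrict B E0) C -> #|C| = n -> exists2 H, H \in Hs & C \subset H.
Proof.
rewrite core_circuitE /qp_type2 /qp_type3 => /andP [_ + cardC]; rewrite cardC eqxx /=.
by case/orP => [/andP [/exists_inP [H HsH CH] _] | /andP [/eqP]]; [exists H | lia].
Qed.

Lemma core_candidate_member (D : {set T}) :
  dh_candidate n E0 (restrict B E0) D -> exists2 H, H \in Hs & D \subset H.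
Proof.
case/and3P => DE0 nD /forall_inP n_circuits.
have member (S : {set T}) : S \subset D -> #|S| = n -> exists2 H, H \in Hs & S \subset H.
  move=> SD cardS; move: (n_circuits S); rewrite powersetE SD cardS eqxx => /(_ isT).
  by move/core_circuit_member/(_ cardS).
(* Trading a point of an n-subset S for z gives another n-circuit; in a member
   H' other than H, the n - 1 common points would form a type-1 circuit. *)
have [S SD cardS] := exists_subset_card nD; have [H HsH SH] := member S SD cardS.
exists H => //; apply/subsetP => z zD.
have [zS | zS] := boolP (z \in S); first exact: subsetP SH z zS.
have /set0Pn [s sS] : S != set0 by rewrite -card_gt0 cardS.
have S'D : z |: (S :\ s) \subset D.
  by rewrite subUset sub1set zD (subset_trans (subsetDl _ _) SD).
have cardS' : #|z |: (S :\ s)| = n.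
  by rewrite cardsU1 in_setD1 (negbTE zS) andbF -cardS (cardsD1 s S) sS.
have [H' HsH' S'H'] := member _ S'D cardS'.
have [-> | HH'] := eqVneq H H'; first by apply: (subsetP S'H'); rewrite setU11.
have SsM : S :\ s \subset H :&: H'.
  by rewrite subsetI (subset_trans (subsetDl _ _) SH) (subset_trans (subsetUr _ _) S'H').
have cardSs : #|S :\ s| = n.-1 by rewrite -cardS (cardsD1 s S) sS.
have SsE0 : S :\ s \subset E0 by apply: subset_trans (subsetDl _ _) (subset_trans SD DE0).
by have := free0 SsE0; rewrite (meet_type1 HsH HsH' HH' SsM cardSs).
Qed.

Lemma core_member_candidate (H : {set T}) : H \in Hs -> n <= #|H :&: E0| ->
  dh_candidate n E0 (restrict B E0) (H :&: E0).
Proof.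
move=> HsH large; rewrite /dh_candidate subsetIr large.
apply/forall_inP => C /[!powersetE] CHE; apply/implyP => /eqP cardC.
have CE0 := subset_trans CHE (subsetIr _ _).
rewrite core_circuitE CE0 /qp_type2 cardC eqxx /=.
have -> : [exists H0 in Hs, C \subset H0].
  by apply/exists_inP; exists H => //; apply: subset_trans CHE (subsetIl _ _).
suff -> : ~~ [exists D in powerset C, qp_type1 n Hs D] by [].
by apply/exists_inP => -[D /[!powersetE] DC]; apply/negP/free0/(subset_trans DC).
Qed.

Lemma core_dep_hyperplane (D : {set T}) :
  dep_hyperplane n E0 (restrict B E0) D -> exists2 H, H \in Hs & D = H :&: E0.
Proof.
case/andP => candD /forallP maxD; have [H HsH DH] := core_candidate_member candD.
exists H => //; have /and3P [DE0 nD _] := candD.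
have DHE : D \subset H :&: E0 by rewrite subsetI DH.
case: (eqVproper DHE) => // ltD.
have := maxD (H :&: E0); rewrite ltD core_member_candidate //.
exact: leq_trans nD (subset_leq_card DHE).
Qed.

Lemma core_tame : tame_paving E0 (restrict B E0).
Proof.
rewrite /tame_paving (mrank_restrict matroidB span0) rankB; split.
  split; first by rewrite (mrank_restrict matroidB span0).
  move=> C; rewrite core_circuitE /qp_type2 /qp_type3.
  by case/andP => _ /orP [/and3P [/eqP -> _ _] | /andP [/eqP -> _]]; [left | right].
move=> D1 D2 D3 /core_dep_hyperplane [H1 H1s ->] /core_dep_hyperplane [H2 H2s ->].
move=> /core_dep_hyperplane [H3 H3s ->] D12 D13 D23.
have neq (H H' : {set T}) : H :&: E0 != H' :&: E0 -> H != H' by apply: contraNneq => ->.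
have M0 := members3 H1s H2s H3s (neq _ _ D12) (neq _ _ D13) (neq _ _ D23).
by apply/eqP; rewrite -subset0 -M0 !setISS ?subsetIl.
Qed.

End Core.

Section ExtensionStep.
Variables (E : {set T}) (a : T) (H1 H2 : {set T}).
Hypotheses (spanE : spanning B E) (aE : a \notin E).
Hypotheses (H1s : H1 \in Hs) (H2s : H2 \in Hs) (H12 : H1 != H2) (aM : a \in H1 :&: H2).
Hypothesis large : n.-2 <= #|H1 :&: H2 :&: E|.

Local Notation F := (E :&: (loops B :|: H1 :&: H2)).

Let pred2S : n.-2.+1 = n.-1.
Proof. by rewrite prednK // ltn_predRL (meet_gt1 H1s H2s H12). Qed.

Lemma card_indep_flat (Y : {set T}) : Y \subset F -> indep B Y -> #|Y| <= n.-2.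
Proof.
move=> YF indY; have YM : Y \subset H1 :&: H2.
  apply/subsetP => y yY; move/subsetP/(_ y yY): YF.
  by rewrite in_setI in_setU (negbTE (notin_loops indY yY)) => /andP [].
by rewrite -ltnS pred2S -(setIidPl YM) card_indep_meet.
Qed.

Lemma flat_basis : exists2 K : {set T}, K \subset F /\ #|K| = n.-2 &
  forall x, x \in E :\: F -> indep B (x |: K).
Proof.
have [K KME cardK] := exists_subset_card large.
have KM : K \subset H1 :&: H2 := subset_trans KME (subsetIl _ _).
exists K.
  by rewrite subsetI (subset_trans KME (subsetIr _ _)) (subset_trans KM (subsetUr _ _)).
move=> x /setDP [xE xF].
apply: (circuit_free_indep (subsetT _)) => C CxK; apply/negP => circC.
have xC : x \in C.
  have [// | xC] := boolP (x \in C).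
  have CK : C \subset K.
    apply/subsetP => z zC; case/setU1P: (subsetP CxK z zC) => // zx.
    by rewrite -zx zC in xC.
  by have := circuit_dep circC CK; rewrite small_indep // cardK -pred2S.
(* A circuit inside x |: K is type 1; it is {x}, making x a loop, or shares a
   point of K, hence its meet, with H1 :&: H2. *)
have cardC : #|C| <= n.-1.
  rewrite -pred2S -cardK; apply: leq_trans (subset_leq_card CxK) _.
  by rewrite cardsU1 -add1n leq_add2r leq_b1.
case/andP: (small_circuit_type1 circC cardC) => _.
case/exists_inP => H3 H3s /exists_inP [H4 H4s /andP [H34 CM']].
have [Cx | /subsetPn [k kC kx]] := boolP (C \subset [set x]).
  by move: xF; rewrite !inE xE (circuit_dep circC Cx).
have kK : k \in K.
  by case/setU1P: (subsetP CxK k kC) => // kx'; rewrite kx' set11 in kx.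
have M34 := meet_eq H1s H2s H3s H4s H12 H34 (subsetP KM k kK) (subsetP CM' k kC).
by move: xF; rewrite in_setI in_setU xE M34 (subsetP CM' x xC) orbT.
Qed.

Lemma rank_flat_le : rank (restrict B E) F <= n.-2.
Proof.
apply: rank_leq => Y YF; rewrite (indep_restrict matroidB spanE) => /andP [indY _].
exact: card_indep_flat.
Qed.

Lemma flat_step : flat E (restrict B E) F.
Proof.
have [K [KF cardK] indxK] := flat_basis.
rewrite /flat subsetIl; apply/forall_inP => x xEF; apply: leq_ltn_trans rank_flat_le _.
have xK : x \notin K by apply: contra (subsetP KF x) (setDP xEF).2.
have : #|x |: K| <= rank (restrict B E) (x |: F).
  apply: leq_card_rank; first exact: setUS.
  rewrite (indep_restrict matroidB spanE) indxK // subUset sub1set (setDP xEF).1.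
  exact: subset_trans KF (subsetIl _ _).
by rewrite cardsU1 xK cardK add1n.
Qed.

Lemma rank_flat : (rank (restrict B E) F).+2 = n.
Proof.
have [K [KF cardK] _] := flat_basis.
suff -> : rank (restrict B E) F = n.-2.
  by rewrite pred2S prednK // ltnW // (meet_gt1 H1s H2s H12).
have indK : indep (restrict B E) K.
  rewrite (indep_restrict matroidB spanE) small_indep ?(subset_trans KF (subsetIl _ _)) //.
  by rewrite cardK -pred2S.
by apply/eqP; rewrite eqn_leq rank_flat_le -cardK (leq_card_rank KF indK).
Qed.

Lemma restrict_pext : restrict B (a |: E) = pext_bases (restrict B E) F a.
Proof.
apply/setP => X; rewrite !inE; apply/andP/orP => [[XB XaE] | [/andP [XB XE] | ]].
- have [aX | aX] := boolP (a \in X); last first.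
    left; rewrite XB; apply/subsetP => z zX.
    by case/setU1P: (subsetP XaE z zX) => // za; rewrite -za zX in aX.
  have [y /setIP [yM yE] yX] := meet_avoid (basis_indep XB) H1s H2s H12 aX aM aE large.
  right; apply/imset2P; exists (y |: (X :\ a)) y.
  + rewrite inE (meet_exchange_basis XB H1s H2s H12 aX aM yM yX) subUset sub1set yE.
    apply/subsetP => z /setD1P [za zX].
    by case/setU1P: (subsetP XaE z zX) => // /eqP; rewrite (negbTE za).
  + by rewrite in_setI setU11 in_setI yE in_setU yM orbT.
  + apply/setP => z; rewrite !inE.
    have [-> | _] := eqVneq z a; first by rewrite aX.
    by have [-> | _] := eqVneq z y; rewrite ?(negbTE yX).
- by split => //; apply: subset_trans XE (subsetUr _ _).
case/imset2P => l b + /setIP [bl bF] ->; rewrite inE => /andP [lB lE].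
have bM : b \in H1 :&: H2.
  have /negbTE bL := notin_loops (basis_indep lB) bl.
  by move: bF; rewrite in_setI in_setU bL => /andP [].
have al : a \notin l by apply: contra (subsetP lE a) aE.
split; first exact: meet_exchange_basis lB H1s H2s H12 bl bM aM al.
rewrite subUset sub1set setU11; apply: subset_trans (subsetDl _ _) _.
exact: subset_trans lE (subsetUr _ _).
Qed.

End ExtensionStep.

(* The closure of the meet through a: for n = 2 every meet consists of loops
   and all loops must be added, for n > 2 there are none. *)
Definition meet_flat (E : {set T}) (a : T) : {set T} := E :&: (loops B :|: meet_at a).

Lemma extension_step (E : {set T}) a : meets_spanned E -> a \notin E ->
  [/\ is_matroid (a |: E) (restrict B (a |: E)),
      flat E (restrict B E) (meet_flat E a),
      (rank (restrict B E) (meet_flat E a)).+2 = n &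
      restrict B (a |: E) = pext_bases (restrict B E) (meet_flat E a) a].
Proof.
move=> spanned aE; have spanE := meets_spanned_spanning spanned.
have [H1 [H2 [H1s H2s H12 aM large]]] := spanned a aE.
rewrite /meet_flat (meet_atE H1s H2s H12 aM); split.
- exact: restrict_matroid matroidB (spanningS (subsetUr _ _) spanE).
- exact: flat_step spanE H1s H2s H12 large.
- exact: rank_flat spanE H1s H2s H12 large.
- exact: restrict_pext aE H1s H2s H12 aM large.
Qed.

End QuasiPaving.

Theorem proposition3p7 (T : finType) (n : nat) (B : {set {set T}}) :
  is_matroid [set: T] B ->
  quasi_paving n B ->
  mrank [set: T] B = n ->
  exists (r : nat) (E : nat -> {set T}) (Bs : nat -> {set {set T}})
         (F : nat -> {set T}) (a : nat -> T),
    [/\ is_matroid (E 0) (Bs 0),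
        tame_paving (E 0) (Bs 0),
        (forall i, 0 < i <= r ->
           [/\ is_matroid (E i) (Bs i),
               a i \notin E i.-1 /\
               E i = a i |: E i.-1,
               flat (E i.-1) (Bs i.-1) (F i),
               (rank (Bs i.-1) (F i)).+2 = n &
               Bs i = pext_bases (Bs i.-1) (F i) (a i)]),
        E r = [set: T] &
        Bs r = B].
Proof.
move=> matroidB [n_gt0 [n_le_T [Hs [members3 circuitP]]]] rankB.
have [E0 [free0 spanned0]] := exists_core matroidB members3 circuitP.
have /card_gt0P [x0 _] : 0 < #|T| := leq_trans n_gt0 n_le_T.
have [r [E [a [E_0 E_r chain]]]] := exists_saturating_chain x0 E0.
exists r, E, (fun i => restrict B (E i)), (fun i => meet_flat B Hs (E i.-1) (a i)), a.
have span0 := meets_spanned_spanning matroidB rankB members3 circuitP spanned0.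
split=> [||i /chain [E0E aE ->]||].
- by rewrite /= E_0; apply: restrict_matroid matroidB span0.
- rewrite /= E_0.
  exact: (core_tame matroidB rankB n_gt0 members3 circuitP free0 spanned0).
- have spannedE := meets_spannedS E0E spanned0.
  by have [] := extension_step matroidB rankB n_gt0 members3 circuitP spannedE aE.
- exact: E_r.
- by rewrite E_r; apply/setP => b; rewrite inE subsetT andbT.
Qed.
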